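(* Let $s,y\in\mathbb{R}^n$ with $s^Ty>0$, and for $\tau\in[0,1]$ and $\alpha>0$ define $$\phi_\tau(\alpha)=\Big\|\tau\Big(\tfrac{1}{\alpha}s-y\Big)+(1-\tau)(s-\alpha y)\Big\|^2 .$$ Let $\alpha^{BB1}=\dfrac{s^Ts}{s^Ty}$ and $\alpha^{BB2}=\dfrac{s^Ty}{y^Ty}$. For each $\tau\in[0,1]$, the equation $\phi_\tau'(\alpha)=0$ has a unique root $\alpha(\tau)$ in $[\alpha^{BB2},\alpha^{BB1}]$. Then $\tau\mapsto\alpha(\tau)$ is monotone on $[0,1]$.
   Context: $\|\cdot\|$ is the Euclidean norm and $\phi_\tau'$ is the derivative of $\phi_\tau$ with respect to $\alpha$. *)

From HB Require Import structures.
From mathcomp Require Import all_boot all_order all_algebra.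
From mathcomp Require Import all_classical all_reals all_analysis.
Set Implicit Arguments. Unset Strict Implicit. Unset Printing Implicit Defensive.
Import Order.TTheory GRing.Theory Num.Theory.
Import numFieldNormedType.Exports.
Local Open Scope ring_scope.

Definition dotv {R : realType} {n : nat} (u v : 'rV[R]_n) : R :=
  \sum_(i < n) u 0 i * v 0 i.
Definition enorm {R : realType} {n : nat} (v : 'rV[R]_n) : R :=
  Num.sqrt (dotv v v).

Definition phi {R : realType} {n : nat} (s y : 'rV[R]_n) (tau alpha : R) : R :=
  enorm (tau *: (alpha^-1 *: s - y) + (1 - tau) *: (s - alpha *: y)) ^+ 2.

Definition alphaBB1 {R : realType} {n : nat} (s y : 'rV[R]_n) : R :=
  dotv s s / dotv s y.
Definition alphaBB2 {R : realType} {n : nat} (s y : 'rV[R]_n) : R :=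
  dotv s y / dotv y y.

From HB Require Import structures.
From mathcomp Require Import all_boot all_order all_algebra.
From mathcomp Require Import all_classical all_reals all_analysis.
From mathcomp Require Import ring.

Set Implicit Arguments.
Unset Strict Implicit.
Unset Printing Implicit Defensive.

Import Order.TTheory GRing.Theory Num.Theory.
Import numFieldNormedType.Exports.
Local Open Scope ring_scope.

(* With a = s's, b = s'y and c = y'y, the vector inside phi_tau(x) is (tau/x + 1 - tau)(s - x y),
   so phi_tau'(x) = 2 (tau/x + 1 - tau) x^-2 crit tau x, where
   crit tau x = (1 - tau) x^2 (c x - b) + tau (b x - a).
   On [BB2, BB1] = [b/c, a/b], nonempty by Cauchy-Schwarz, the first summand is nonnegative and
   strictly increasing in x while the second is nonpositive and increasing. Hence crit tau changes
   sign and is strictly increasing there, so it has exactly one root, and crit is nonincreasing in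
   tau, which forces that root to be nondecreasing in tau. *)

Lemma convex_gt0 (R : numDomainType) (t u v : R) :
  0 <= t <= 1 -> 0 < u -> 0 < v -> 0 < (1 - t) * u + t * v.
Proof.
case/andP=> t_ge0 t_le1 u_gt0 v_gt0; have [->|t_neq0] := eqVneq t 0.
  by rewrite subr0 mul1r mul0r addr0.
have t_gt0 : 0 < t by rewrite lt_def t_neq0.
by rewrite ltr_wpDl ?mulr_ge0 ?subr_ge0 ?mulr_gt0 // ltW.
Qed.

Section CriticalPointEquation.
Variables (R : realType) (a b c : R).

Definition crit (t x : R) : R := (1 - t) * x ^+ 2 * (c * x - b) + t * (b * x - a).

Lemma continuous_crit t : continuous (crit t).
Proof.
have -> : crit t = horner (((1 - t) * c)%:P * 'X^3 - ((1 - t) * b)%:P * 'X^2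
                             + (t * b)%:P * 'X - (t * a)%:P).
  apply/funext => x.
  by rewrite /crit !(hornerD, hornerN, hornerM, hornerC, hornerX, hornerXn); ring.
by move=> x; apply: continuous_horner.
Qed.

Hypotheses (b_gt0 : 0 < b) (c_gt0 : 0 < c).

Lemma crit_strictly_increasing t x1 x2 :
  0 <= t <= 1 -> b / c <= x1 -> x1 < x2 -> crit t x1 < crit t x2.
Proof.
move=> t01 x1_ge x12.
have x1_gt0 : 0 < x1 := lt_le_trans (divr_gt0 b_gt0 c_gt0) x1_ge.
have cx1_ge : b <= c * x1 by rewrite mulrC -ler_pdivrMr.
have x2_gt0 : 0 < x2 := lt_trans x1_gt0 x12.
have cx2_ge : b <= c * x2 by rewrite (le_trans cx1_ge) // ler_pM2l // ltW.
have cubic_lt : x1 ^+ 2 * (c * x1 - b) < x2 ^+ 2 * (c * x2 - b).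
  rewrite -subr_gt0 (_ : _ - _ = (x2 - x1) *
      (c * x1 * x2 + (x1 * (c * x1 - b) + x2 * (c * x2 - b)))); last by ring.
  by rewrite mulr_gt0 ?subr_gt0 // ltr_pwDl ?mulr_gt0 // addr_ge0 // mulr_ge0 ?subr_ge0 // ltW.
have linear_lt : b * x1 - a < b * x2 - a by rewrite ltrD2r ltr_pM2l.
rewrite -subr_gt0 (_ : _ - _ = (1 - t) * (x2 ^+ 2 * (c * x2 - b) - x1 ^+ 2 * (c * x1 - b))
                               + t * ((b * x2 - a) - (b * x1 - a))); last by rewrite /crit; ring.
by apply: convex_gt0; rewrite ?subr_gt0.
Qed.

Lemma crit_nonincreasing_in_t t1 t2 x :
  t1 <= t2 -> b / c <= x <= a / b -> crit t2 x <= crit t1 x.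
Proof.
move=> t12 /andP[x_ge x_le].
rewrite -subr_le0 (_ : _ - _ = (t2 - t1) * ((b * x - a) - x ^+ 2 * (c * x - b)));
  last by rewrite /crit; ring.
have linear_le0 : b * x - a <= 0 by rewrite subr_le0 mulrC -ler_pdivlMr.
have cubic_ge0 : 0 <= x ^+ 2 * (c * x - b).
  by rewrite mulr_ge0 ?sqr_ge0 // subr_ge0 mulrC -ler_pdivrMr.
by rewrite mulr_ge0_le0 ?subr_ge0 // subr_le0 (le_trans linear_le0 cubic_ge0).
Qed.

Lemma crit_root_le t1 t2 x1 x2 : 0 <= t1 -> t1 <= t2 -> t2 <= 1 ->
  b / c <= x1 <= a / b -> b / c <= x2 -> crit t1 x1 = 0 -> crit t2 x2 = 0 -> x1 <= x2.
Proof.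
move=> t1_ge0 t12 t2_le1 x1_in x2_ge root1 root2; rewrite leNgt; apply/negP => x21.
have t2_01 : 0 <= t2 <= 1 by rewrite t2_le1 (le_trans t1_ge0).
have := @crit_strictly_increasing t2 x2 x1 t2_01 x2_ge x21.
by rewrite root2 ltNge -root1 crit_nonincreasing_in_t.
Qed.

Hypothesis Cauchy_Schwarz : b ^+ 2 <= a * c.

Lemma crit_root_exists t : 0 <= t <= 1 ->
  exists2 x, b / c <= x <= a / b & crit t x = 0.
Proof.
case/andP=> t_ge0 t_le1.
have BB2_le_BB1 : b / c <= a / b by rewrite ler_pdivrMr // mulrAC ler_pdivlMr // -expr2.
have left_le0 : crit t (b / c) <= 0.
  rewrite /crit [c * _]mulrC divfK ?gt_eqF // subrr mulr0 add0r mulr_ge0_le0 // subr_le0.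
  by rewrite mulrA -expr2 ler_pdivrMr.
have right_ge0 : 0 <= crit t (a / b).
  rewrite /crit [b * _]mulrC divfK ?gt_eqF // subrr mulr0 addr0.
  apply: mulr_ge0; first by rewrite mulr_ge0 ?sqr_ge0 ?subr_ge0.
  by rewrite subr_ge0 mulrA ler_pdivlMr // [c * a]mulrC -expr2.
have sign_change : Num.min (crit t (b / c)) (crit t (a / b)) <= 0
                    <= Num.max (crit t (b / c)) (crit t (a / b)).
  by rewrite ge_min le_max left_le0 right_ge0 orbT.
have [x x_in root] :=
  IVT BB2_le_BB1 (continuous_subspaceT (@continuous_crit t)) sign_change.
by exists x; rewrite // -in_itv.
Qed.

End CriticalPointEquation.

Section DotProduct.
Variables (R : realType) (n : nat).
Implicit Types (u v s y : 'rV[R]_n) (k x : R).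

Lemma dotv_ge0 v : 0 <= dotv v v.
Proof. by apply: sumr_ge0 => i _; rewrite -expr2 sqr_ge0. Qed.

Lemma dotv_eq0 v : dotv v v = 0 -> v = 0.
Proof.
move=> v0; apply/rowP => j; apply/eqP; rewrite mxE -sqrf_eq0 expr2.
by apply/eqP; apply: (psumr_eq0P _ v0) => // i _; rewrite -expr2 sqr_ge0.
Qed.

Lemma dotv0r u : dotv u 0 = 0.
Proof. by rewrite /dotv big1 // => i _; rewrite mxE mulr0. Qed.

Lemma dotvZZ k v : dotv (k *: v) (k *: v) = k ^+ 2 * dotv v v.
Proof. by rewrite /dotv mulr_sumr; apply: eq_bigr => i _; rewrite !mxE; ring. Qed.

Lemma dotv_subZ s y x :
  dotv (s - x *: y) (s - x *: y) = dotv s s - 2 * x * dotv s y + x ^+ 2 * dotv y y.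
Proof.
rewrite /dotv !mulr_sumr -sumrN -!big_split /=; apply: eq_bigr => i _.
by rewrite !mxE; ring.
Qed.

Lemma dotv_CauchySchwarz s y : dotv s y ^+ 2 <= dotv s s * dotv y y.
Proof.
have [y0|y_neq0] := eqVneq y 0; first by rewrite y0 !dotv0r mulr0 expr0n.
have c_gt0 : 0 < dotv y y.
  by rewrite lt_def dotv_ge0 andbT; apply: contra_neq y_neq0; apply: dotv_eq0.
have := dotv_ge0 (s - (dotv s y / dotv y y) *: y); rewrite dotv_subZ.
set a := dotv s s; set b := dotv s y; set c := dotv y y in c_gt0 * => sq_ge0.
rewrite -subr_ge0 (_ : _ - _ = c * (a - 2 * (b / c) * b + (b / c) ^+ 2 * c)).
  by rewrite mulr_ge0 // ltW.
by field; rewrite gt_eqF.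
Qed.

Lemma dotv_self_gt0 s y : 0 < dotv s y -> 0 < dotv y y.
Proof.
move=> b_gt0; rewrite lt_def dotv_ge0 andbT.
by apply: contraTneq b_gt0 => /dotv_eq0 ->; rewrite dotv0r ltxx.
Qed.

End DotProduct.

Section PhiDerivative.
Variables (R : realType) (n : nat) (s y : 'rV[R]_n).

Lemma phiE t x : x != 0 ->
  phi s y t x = (t / x + (1 - t)) ^+ 2
                * (dotv s s - 2 * x * dotv s y + x ^+ 2 * dotv y y).
Proof.
move=> x_neq0; rewrite /phi /enorm sqr_sqrtr ?dotv_ge0 // -dotv_subZ -dotvZZ.
by congr dotv; apply/rowP => i; rewrite !mxE; field.
Qed.

Lemma derive1_phi t x : 0 < x ->
  derive1 (phi s y t) x
  = 2 * (t / x + (1 - t)) / x ^+ 2 * crit (dotv s s) (dotv s y) (dotv y y) t x.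
Proof.
move=> x_gt0; have x_neq0 : x != 0 by rewrite gt_eqF.
rewrite derive1E (@near_eq_derive _ _ _ _ (fun z : R => (t / z + (1 - t)) ^+ 2
    * (dotv s s - 2 * z * dotv s y + z ^+ 2 * dotv y y))).
  have dinv : is_derive x (1 : R) (fun z : R => z^-1) (- x ^- 2).
    by apply: is_derive_eq; [apply: is_deriveV|rewrite scaler1].
  apply: derive_val; apply: is_derive_eq.
  rewrite !scaler0 !addr0 !add0r mul1r /GRing.scale /= !mulr1 /crit.
  by field.
by near=> z; apply: phiE; rewrite gt_eqF //; near: z; apply: lt_nbhsr.
Unshelve. all: by end_near.
Qed.

Lemma derive1_phi_eq0 t x : 0 <= t <= 1 -> 0 < x ->
  derive1 (phi s y t) x = 0 <-> crit (dotv s s) (dotv s y) (dotv y y) t x = 0.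
Proof.
move=> t01 x_gt0; rewrite derive1_phi //.
have factor_gt0 : 0 < 2 * (t / x + (1 - t)) / x ^+ 2.
  by rewrite divr_gt0 ?exprn_gt0 // mulr_gt0 // addrC -[1 - t]mulr1 convex_gt0 ?invr_gt0.
split=> [/eqP|->]; last by rewrite mulr0.
by rewrite mulf_eq0 gt_eqF //= => /eqP.
Qed.

End PhiDerivative.

Theorem proposition2 (R : realType) (n : nat) (s y : 'rV[R]_n) :
  0 < dotv s y ->
  (forall tau : R, 0 <= tau <= 1 ->
     exists! a : R, alphaBB2 s y <= a <= alphaBB1 s y /\
                    derive1 (phi s y tau) a = 0) /\
  (forall alpha : R -> R,
     (forall tau : R, 0 <= tau <= 1 ->
        alphaBB2 s y <= alpha tau <= alphaBB1 s y /\
        derive1 (phi s y tau) (alpha tau) = 0) ->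
     (forall t1 t2 : R, 0 <= t1 -> t1 <= t2 -> t2 <= 1 -> alpha t1 <= alpha t2) \/
     (forall t1 t2 : R, 0 <= t1 -> t1 <= t2 -> t2 <= 1 -> alpha t2 <= alpha t1)).
Proof.
move=> b_gt0; rewrite /alphaBB1 /alphaBB2.
have c_gt0 := dotv_self_gt0 b_gt0.
have cauchy_schwarz := dotv_CauchySchwarz s y.
set a := dotv s s in cauchy_schwarz *; set b := dotv s y in b_gt0 cauchy_schwarz *.
set c := dotv y y in c_gt0 cauchy_schwarz *.
have stationary t x : 0 <= t <= 1 -> b / c <= x <= a / b ->
    derive1 (phi s y t) x = 0 <-> crit a b c t x = 0.
  move=> t01 /andP[x_ge _]; apply: derive1_phi_eq0 => //.
  by rewrite (lt_le_trans _ x_ge) ?divr_gt0.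
split=> [t t01|alpha alpha_root].
  have [t_ge0 t_le1] := andP t01.
  have [x x_in root] := crit_root_exists b_gt0 c_gt0 cauchy_schwarz t01.
  exists x; split=> [|x' [x'_in /(stationary t x' t01 x'_in) root']].
    by split=> //; apply/(stationary t x t01 x_in).
  have [[x_ge _] [x'_ge _]] := (andP x_in, andP x'_in).
  by apply/le_anti/andP; split;
    apply: (crit_root_le (a := a) b_gt0 c_gt0 t_ge0 (lexx t) t_le1).
left=> t1 t2 t1_ge0 t12 t2_le1.
have t1_01 : 0 <= t1 <= 1 by rewrite t1_ge0 (le_trans t12).
have t2_01 : 0 <= t2 <= 1 by rewrite t2_le1 (le_trans t1_ge0).
have [alpha1_in /(stationary _ _ t1_01 alpha1_in) root1] := alpha_root t1 t1_01.
have [alpha2_in /(stationary _ _ t2_01 alpha2_in) root2] := alpha_root t2 t2_01.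
exact: (crit_root_le b_gt0 c_gt0 t1_ge0 t12 t2_le1 alpha1_in (andP alpha2_in).1).
Qed.
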